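(* Let $\Lambda=(\mathcal{L}\subset\mathbb{R}^s,\mathbb{R}^n)$ be a generic cut-and-project scheme with associated matrix $L$ and self-similarity $A\in\mathbb{R}^{n\times n}$, and let $B\in\mathbb{R}^{(s-n)\times(s-n)}$, $C\in\mathbb{Z}^{s\times s}$ satisfy $\begin{pmatrix}A&O\\O&B\end{pmatrix}L=LC$. Then each eigenvalue of $A$ is an algebraic conjugate of an eigenvalue of $B$, and each eigenvalue of $B$ is an algebraic conjugate of an eigenvalue of $A$.
   Context: Two algebraic numbers are algebraic conjugates if they have the same minimal polynomial over $\mathbb{Q}$. A lattice $\mathcal{L}\subset\mathbb{R}^s$ is $\{L\mathbf{r}:\mathbf{r}\in\mathbb{Z}^s\}$ for a non-singular $L\in\mathbb{R}^{s\times s}$. For $1\le n<s$ the scheme $(\mathcal{L}\subset\mathbb{R}^s,\mathbb{R}^n)$ has projections $\pi_\parallel(\mathbf{x})=(x_1,\dots,x_n)^\top$, $\pi_\perp(\mathbf{x})=(x_{n+1},\dots,x_s)^\top$; it is generic if $\pi_\parallel|_{\mathcal{L}}$, $\pi_\perp|_{\mathcal{L}}$ are injective and $\pi_\perp(\mathcal{L})$ is dense in $\mathbb{R}^{s-n}$. $A$ is a self-similarity of a generic scheme if $A\pi_\parallel(\mathcal{L})\subset\pi_\parallel(\mathcal{L})$ and there exist $C\in\mathbb{Z}^{s\times s}$, $B$ real with $\begin{pmatrix}A&O\\O&B\end{pmatrix}L=LC$. *)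

From HB Require Import structures.
From mathcomp Require Import all_boot all_order all_algebra.
From mathcomp Require Import reals complex.
Set Implicit Arguments. Unset Strict Implicit. Unset Printing Implicit Defensive.
Import Order.TTheory GRing.Theory Num.Theory.
Local Open Scope ring_scope.

(* Points of R^s are column vectors 'cV[R]_s, with s = n + m (m = s - n). *)

Definition latpt (R : realType) (s : nat) (L : 'M[R]_s) (r : 'cV[int]_s) : 'cV[R]_s :=
  L *m map_mx intr r.

Definition pi_par (R : realType) (n m : nat) (x : 'cV[R]_(n + m)) : 'cV[R]_n := usubmx x.
Definition pi_perp (R : realType) (n m : nat) (x : 'cV[R]_(n + m)) : 'cV[R]_m := dsubmx x.

Definition generic_scheme (R : realType) (n m : nat) (L : 'M[R]_(n + m)) : Prop :=
  [/\ L \in unitmx,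
      (forall r1 r2, pi_par (latpt L r1) = pi_par (latpt L r2) -> latpt L r1 = latpt L r2),
      (forall r1 r2, pi_perp (latpt L r1) = pi_perp (latpt L r2) -> latpt L r1 = latpt L r2)
    &
      (forall (y : 'cV[R]_m) (e : R), 0 < e ->
         exists r, forall i, `|pi_perp (latpt L r) i 0 - y i 0| < e)].

Definition self_similarity (R : realType) (n m : nat) (L : 'M[R]_(n + m)) (A : 'M[R]_n) : Prop :=
  (forall r, exists r', A *m pi_par (latpt L r) = pi_par (latpt L r')) /\
  exists (C : 'M[int]_(n + m)) (B : 'M[R]_m),
    block_mx A 0 0 B *m L = L *m map_mx intr C.

Definition cmx (R : realType) (p q : nat) (M : 'M[R]_(p, q)) : 'M[R[i]]_(p, q) :=
  map_mx (fun x => (x%:C)%C) M.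

(* x and y are algebraic conjugates: algebraic numbers with the same minimal
   polynomial over Q, i.e. both roots of one monic irreducible rational polynomial. *)
Definition alg_conj (R : realType) (x y : R[i]) : Prop :=
  exists p : {poly rat}, [/\ p \is monic, irreducible_poly p,
    root (map_poly ratr p) x & root (map_poly ratr p) y].

(* The integer matrix C is similar, via L, to diag(A, B), so p(C) is singular exactly when p(A)
   or p(B) is, for every polynomial p. In particular each eigenvalue z of A or B is a root of
   char_poly C, hence of a monic irreducible rational factor p of it. Conversely, if the
   rational matrix p(C) is singular it has an integer kernel vector r != 0, and by genericity
   both projections of the lattice point L r are nonzero; since they lie in the kernels of
   p(A) and p(B), these are singular together. A singular p(B) forces an eigenvalue of B
   among the roots of p, which is then a conjugate of z, and symmetrically. *)
From HB Require Import structures.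
From mathcomp Require Import all_boot all_order all_algebra.
From mathcomp Require Import reals complex.
From Stdlib Require Import Classical.
From mathcomp Require Import ring.
Import GRing.Theory Num.Theory.
Set Implicit Arguments. Unset Strict Implicit. Unset Printing Implicit Defensive.
Local Open Scope ring_scope.

Lemma horner_mx_XsubC (R : comNzRingType) n (M : 'M[R]_n.+1) a :
  horner_mx M ('X - a%:P) = M - a%:M.
Proof. by rewrite rmorphB /= horner_mx_X horner_mx_C. Qed.

Lemma horner_mx_intertwine (R : comNzRingType) n (X M N : 'M[R]_n.+1) p :
  X *m M = N *m X -> X *m horner_mx M p = horner_mx N p *m X.
Proof.
move=> XM; elim/poly_ind: p => [|p c IHp]; first by rewrite !rmorph0 mulmx0 mul0mx.
rewrite !rmorphD !rmorphM /= !horner_mx_X !horner_mx_C -!mulmxE.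
by rewrite mulmxDr mulmxDl mulmxA IHp -!mulmxA XM scalar_mxC.
Qed.

Lemma horner_mx_block_diag (R : comNzRingType) a b
    (A : 'M[R]_a.+1) (B : 'M[R]_b.+1) p :
  horner_mx (block_mx A 0 0 B : 'M_(a.+1 + b.+1)) p =
  block_mx (horner_mx A p) 0 0 (horner_mx B p).
Proof.
elim/poly_ind: p => [|p c IHp]; first by rewrite !rmorph0 block_mx0.
rewrite !rmorphD !rmorphM /= !horner_mx_X !horner_mx_C -!mulmxE IHp.
rewrite (@mulmx_block _ a.+1 b.+1 a.+1 b.+1 a.+1 b.+1).
rewrite !mulmx0 !mul0mx !addr0 !add0r.
by rewrite (@scalar_mx_block _ a.+1 b.+1) (@add_block_mx _ a.+1 b.+1 a.+1 b.+1) !addr0.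
Qed.

Lemma det_horner_mx_block_diag (R : comNzRingType) a b
    (A : 'M[R]_a.+1) (B : 'M[R]_b.+1) p :
  \det (horner_mx (block_mx A 0 0 B : 'M_(a.+1 + b.+1)) p) =
  \det (horner_mx A p) * \det (horner_mx B p).
Proof. by rewrite horner_mx_block_diag (@det_ublock _ a.+1 b.+1). Qed.

Lemma det_horner_mx_similar (F : fieldType) n (X M N : 'M[F]_n.+1) p :
  X \in unitmx -> X *m M = N *m X -> \det (horner_mx M p) = \det (horner_mx N p).
Proof.
move=> X_unit XM; have := congr1 determinant (horner_mx_intertwine p XM).
by rewrite !det_mulmx mulrC => /mulIf; apply; rewrite -unitfE -unitmxE.
Qed.

Lemma col_kernel_det0 (F : fieldType) n (M : 'M[F]_n) (v : 'cV_n) :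
  v != 0 -> M *m v = 0 -> \det M = 0.
Proof.
move=> v_neq0 Mv0; apply/eqP; rewrite -det_tr; apply/det0P; exists v^T.
  by rewrite trmx_eq0.
by rewrite -trmx_mul Mv0 trmx0.
Qed.

Lemma eigenvalue_det_horner_mx (F : fieldType) n (M : 'M[F]_n.+1) a :
  eigenvalue M a = (\det (horner_mx M ('X - a%:P)) == 0).
Proof.
rewrite horner_mx_XsubC; apply/eigenvalueP/det0P => [[v Mv v_neq0]|[v v_neq0 Mv]].
  by exists v => //; rewrite mulmxBr Mv mul_mx_scalar subrr.
by exists v => //; apply/eqP; rewrite -subr_eq0 -mul_mx_scalar -mulmxBr Mv.
Qed.

Lemma det_horner_mx_eigenvalue_root (F : fieldType) n (M : 'M[F]_n.+1) p a :
  eigenvalue M a -> root p a -> \det (horner_mx M p) = 0.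
Proof.
rewrite eigenvalue_det_horner_mx => /eqP Ma /factor_theorem[q ->].
by rewrite rmorphM -mulmxE det_mulmx Ma mulr0.
Qed.

Lemma det_horner_mx_eq0_eigenvalue (F : closedFieldType) n (M : 'M[F]_n.+1) p :
  p \is monic -> \det (horner_mx M p) = 0 ->
  exists2 a, eigenvalue M a & root p a.
Proof.
move=> p_monic; have [r ->] := closed_field_poly_normal p.
rewrite (monicP p_monic) scale1r rmorph_prod /=.
elim: r => [|a r IHr]; first by rewrite !big_nil det1 => /eqP; rewrite oner_eq0.
rewrite !big_cons -mulmxE det_mulmx => /eqP.
rewrite mulf_eq0 -eigenvalue_det_horner_mx.
case/orP => [Ma|/eqP/IHr[b Mb rb]].
  by exists a; rewrite // rootM root_XsubC eqxx.
by exists b; rewrite // rootM rb orbT.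
Qed.

Lemma eqp_irredp (R : idomainType) (p q : {poly R}) :
  p %= q -> irreducible_poly p -> irreducible_poly q.
Proof.
move=> pq [p_gt1 p_irr]; split=> [|d d_size dq]; first by rewrite -(eqp_size pq).
by rewrite -(eqp_rtrans pq); apply: p_irr; rewrite // (eqp_dvdr _ pq).
Qed.

Lemma monic_irreducible_root (F K : fieldType) (f : {rmorphism F -> K})
    (p : {poly F}) x :
  p != 0 -> root (map_poly f p) x ->
  exists q : {poly F}, [/\ q \is monic, irreducible_poly q & root (map_poly f q) x].
Proof.
have [k] := ubnP (size p); elim: k p => // k IHk p /ltnSE-le_pk p_neq0 px.
have [p_irr|p_red] := classic (irreducible_poly p).
  have lc_neq0 : (lead_coef p)^-1 != 0 by rewrite invr_eq0 lead_coef_eq0.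
  exists ((lead_coef p)^-1 *: p); split.
  - by rewrite monicE lead_coefZ mulVf ?lead_coef_eq0.
  - by apply: eqp_irredp p_irr; rewrite eqp_sym eqp_scale.
  - by rewrite map_polyZ rootZ ?fmorph_eq0.
have [d [d_size dp d_np]] : exists d : {poly F}, [/\ size d != 1, d %| p & ~~ (d %= p)].
  apply: NNPP => no_d; apply: p_red; split => [|d d_size dp].
    by rewrite -(size_map_poly f); apply: root_size_gt1 px; rewrite map_poly_eq0.
  by apply/negPn/negP => d_np; apply: no_d; exists d.
have d_neq0 : d != 0 by apply: contraNneq p_neq0 => d0; move: dp; rewrite d0 dvd0p.
have d_gt1 : (1 < size d)%N by rewrite ltn_neqAle eq_sym d_size size_poly_gt0 d_neq0.
have d_lt : (size d < size p)%N by rewrite ltn_neqAle dvdp_size_eqp // d_np dvdp_leq.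
have pd_lt : (size (p %/ d)%R < size p)%N.
  by rewrite size_divp // ltn_subrL size_poly_gt0 p_neq0 -subn1 subn_gt0 d_gt1.
have pd_neq0 : p %/ d != 0.
  by apply: contraNneq p_neq0 => pd0; rewrite -(divpK dp) pd0 mul0r.
move: px; rewrite -(divpK dp) rmorphM rootM => /orP[px|px].
  by apply: (IHk (p %/ d)); rewrite // (leq_trans pd_lt).
by apply: (IHk d); rewrite // (leq_trans d_lt).
Qed.

Lemma rat_col_scale_int k (u : 'cV[rat]_k) :
  exists2 d : rat, d != 0 & exists r : 'cV[int]_k, d *: u = map_mx intr r.
Proof.
exists (\prod_i denq (u i 0))%:~R.
  by rewrite intr_eq0; apply/prodf_neq0 => i _; apply: denq_neq0.
exists (\col_i (numq (u i 0) * \prod_(j | j != i) denq (u j 0))).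
apply/matrixP => i j; rewrite !mxE (ord1 j) (bigD1 i) //= !rmorphM /=.
by rewrite numqE; ring.
Qed.

Lemma det0_int_kernel k (M : 'M[rat]_k) :
  \det M = 0 -> exists2 r : 'cV[int]_k, r != 0 & M *m map_mx intr r = 0.
Proof.
move/eqP; rewrite -det_tr => /det0P[v v_neq0 vM].
have [d d_neq0 [r dv]] := rat_col_scale_int v^T.
exists r; last by rewrite -dv -scalemxAr -[M]trmxK -trmx_mul vM trmx0 scaler0.
apply: contraNneq v_neq0 => r0; move/eqP: dv; rewrite r0 map_mx0.
by rewrite scaler_eq0 (negPf d_neq0) trmx_eq0.
Qed.

Lemma map_mx_intr (R S : pzRingType) (f : {rmorphism R -> S}) p q
    (M : 'M[int]_(p, q)) :
  map_mx f (map_mx intr M) = map_mx intr M.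
Proof. by apply/matrixP => i j; rewrite !mxE rmorph_int. Qed.

Lemma map_intr_mx_eq0 (R : numDomainType) p q (M : 'M[int]_(p, q)) :
  (map_mx intr M == 0 :> 'M[R]_(p, q)) = (M == 0).
Proof.
apply/eqP/eqP => [M0|->]; last by rewrite map_mx0.
apply/matrixP => i j; move/matrixP/(_ i j): M0; rewrite !mxE.
by move/eqP; rewrite intr_eq0 => /eqP.
Qed.

Section IntegralBlockSimilarity.

Variables (K : numFieldType) (a b : nat).
Local Notation n := a.+1.
Local Notation m := b.+1.
Variables (L : 'M[K]_(n + m)) (A : 'M[K]_n) (B : 'M[K]_m) (C : 'M[int]_(n + m)).
Hypothesis L_unit : L \in unitmx.
Hypothesis LC : block_mx A 0 0 B *m L = L *m map_mx intr C.
Hypothesis latt_proj_neq0 : forall r : 'cV[int]_(n + m), r != 0 ->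
  usubmx (L *m map_mx intr r) != 0 /\ dsubmx (L *m map_mx intr r) != 0.

Local Notation CK := (map_mx intr C : 'M[K]_(n + m)).
Local Notation CQ := (map_mx intr C : 'M[rat]_(n + m)).
Local Notation "q ^K" := (map_poly ratr q : {poly K}) (at level 2, format "q ^K").

Lemma horner_mx_intC_intertwine p :
  L *m horner_mx CK p = horner_mx (block_mx A 0 0 B) p *m L.
Proof. by apply: horner_mx_intertwine; rewrite LC. Qed.

Lemma det_horner_mx_intC p :
  \det (horner_mx CK p) = \det (horner_mx A p) * \det (horner_mx B p).
Proof.
rewrite -det_horner_mx_block_diag; apply: det_horner_mx_similar L_unit _.
by rewrite LC.
Qed.

Lemma eigenvalue_intC z : eigenvalue CK z = eigenvalue A z || eigenvalue B z.
Proof. by rewrite !eigenvalue_det_horner_mx det_horner_mx_intC mulf_eq0. Qed.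

Lemma map_horner_mx_intC (q : {poly rat}) :
  map_mx ratr (horner_mx CQ q) = horner_mx CK q^K.
Proof. by rewrite map_horner_mx map_mx_intr. Qed.

Lemma det_horner_mx_block_eq0 (q : {poly rat}) :
  (\det (horner_mx A q^K) == 0) = (\det (horner_mx B q^K) == 0).
Proof.
have detC : (\det (horner_mx CQ q) == 0) =
    (\det (horner_mx A q^K) == 0) || (\det (horner_mx B q^K) == 0).
  rewrite -(fmorph_eq0 (ratr : {rmorphism rat -> K})) -det_map_mx.
  by rewrite map_horner_mx_intC det_horner_mx_intC mulf_eq0.
suff kerC : \det (horner_mx CQ q) == 0 ->
    (\det (horner_mx A q^K) == 0) && (\det (horner_mx B q^K) == 0).
  apply/idP/idP => h0.
    by have /kerC/andP[] : \det (horner_mx CQ q) == 0 by rewrite detC h0.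
  by have /kerC/andP[] : \det (horner_mx CQ q) == 0 by rewrite detC h0 orbT.
move/eqP/det0_int_kernel => [r r_neq0 Cr0].
have : block_mx (horner_mx A q^K) 0 0 (horner_mx B q^K) *m (L *m map_mx intr r) = 0.
  rewrite -horner_mx_block_diag mulmxA -horner_mx_intC_intertwine -mulmxA.
  by rewrite -map_horner_mx_intC -(map_mx_intr ratr r) -map_mxM Cr0 map_mx0 mulmx0.
rewrite -[L *m _]vsubmxK (@mul_block_col _ n m n m 1) !mul0mx !addr0 !add0r.
move/eqP; rewrite col_mx_eq0 => /andP[/eqP Ar0 /eqP Br0].
have [Lr_par Lr_perp] := latt_proj_neq0 r_neq0.
by rewrite (col_kernel_det0 Lr_par Ar0) (col_kernel_det0 Lr_perp Br0) eqxx.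
Qed.

Lemma eigenvalue_conj_factor z : eigenvalue A z || eigenvalue B z ->
  exists p : {poly rat}, [/\ p \is monic, irreducible_poly p, root p^K z,
    \det (horner_mx A p^K) == 0 & \det (horner_mx B p^K) == 0].
Proof.
move=> ABz; have Cz : root (char_poly CQ)^K z.
  by rewrite map_char_poly map_mx_intr -eigenvalue_root_char eigenvalue_intC.
have [p [p_monic p_irr pz]] :=
  monic_irreducible_root (monic_neq0 (char_poly_monic CQ)) Cz.
suff A0 : \det (horner_mx A p^K) == 0.
  by exists p; split; rewrite // -det_horner_mx_block_eq0.
have : (\det (horner_mx A p^K) == 0) || (\det (horner_mx B p^K) == 0).
  by case/orP: ABz => /det_horner_mx_eigenvalue_root/(_ pz) ->; rewrite eqxx ?orbT.
by rewrite -det_horner_mx_block_eq0 orbb.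
Qed.

End IntegralBlockSimilarity.

Lemma latpt_neq0 (R : realType) s (L : 'M[R]_s) r :
  L \in unitmx -> r != 0 -> latpt L r != 0.
Proof.
move=> L_unit; rewrite -(map_intr_mx_eq0 R); apply: contraNneq => Lr0.
by rewrite -(mulKmx L_unit (map_mx intr r)) -/(latpt L r) Lr0 mulmx0.
Qed.

Lemma generic_latpt_proj_neq0 (R : realType) n m (L : 'M[R]_(n + m)) r :
  generic_scheme L -> r != 0 ->
  pi_par (latpt L r) != 0 /\ pi_perp (latpt L r) != 0.
Proof.
case=> L_unit par_inj perp_inj _ r_neq0.
have latpt0 : latpt L 0 = 0 by rewrite /latpt map_mx0 mulmx0.
have Lr_neq0 := latpt_neq0 L_unit r_neq0.
split; apply: contra Lr_neq0 => /eqP Lr0; rewrite -latpt0; apply/eqP.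
  by apply: par_inj; rewrite Lr0 latpt0 /pi_par linear0.
by apply: perp_inj; rewrite Lr0 latpt0 /pi_perp linear0.
Qed.

Lemma cmxE (R : realType) p q (M : 'M[R]_(p, q)) :
  cmx M = map_mx (real_complex R) M.
Proof. by []. Qed.

Lemma cmx_latpt (R : realType) s (L : 'M[R]_s) r :
  cmx (latpt L r) = cmx L *m map_mx intr r.
Proof. by rewrite !cmxE map_mxM map_mx_intr. Qed.

Theorem corollary2 (R : realType) (n m : nat) (hn : (0 < n)%N) (hm : (0 < m)%N)
  (L : 'M[R]_(n + m)) (A : 'M[R]_n) (B : 'M[R]_m) (C : 'M[int]_(n + m)) :
  generic_scheme L -> self_similarity L A ->
  block_mx A 0 0 B *m L = L *m map_mx intr C ->
  (forall a : R[i], eigenvalue (cmx A) a ->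
     exists2 b : R[i], eigenvalue (cmx B) b & alg_conj a b) /\
  (forall b : R[i], eigenvalue (cmx B) b ->
     exists2 a : R[i], eigenvalue (cmx A) a & alg_conj b a).
Proof.
case: n hn L A C => // a _ L A C; case: m hm L B C => // b _ L B C gen _ LC.
have cL_unit : cmx L \in unitmx by rewrite cmxE map_unitmx; case: gen.
have cLC : block_mx (cmx A) 0 0 (cmx B) *m cmx L = cmx L *m map_mx intr C.
  rewrite !cmxE -(map_mx_intr (real_complex R) C) -!map_mxM -LC.
  by rewrite map_mxM map_block_mx !map_mx0.
have cL_proj (r : 'cV[int]_(a.+1 + b.+1)) : r != 0 ->
    usubmx (cmx L *m map_mx intr r) != 0 /\ dsubmx (cmx L *m map_mx intr r) != 0.
  move=> r_neq0; have := generic_latpt_proj_neq0 gen r_neq0.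
  by rewrite -!cmx_latpt !cmxE -map_usubmx -map_dsubmx !map_mx_eq0.
have conj := eigenvalue_conj_factor cL_unit cLC cL_proj.
split=> z Mz.
  have /conj[p [p_monic p_irr pz _ /eqP pB]] :
    eigenvalue (cmx A) z || eigenvalue (cmx B) z by rewrite Mz.
  have [w Bw pw] := det_horner_mx_eq0_eigenvalue (monic_map _ p_monic) pB.
  by exists w; last exists p.
have /conj[p [p_monic p_irr pz /eqP pA _]] :
  eigenvalue (cmx A) z || eigenvalue (cmx B) z by rewrite Mz orbT.
have [w Aw pw] := det_horner_mx_eq0_eigenvalue (monic_map _ p_monic) pA.
by exists w; last exists p.
Qed.
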